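(* Every pair of orthogonal quantum Latin squares of order $4$ is classical.
   Context: A quantum Latin square (QLS) of order $n$ is an $n\times n$ matrix $\Psi=(\psi_{ij})_{1\le i,j\le n}$ whose entries are unit vectors in $\mathbb C^n$ such that the entries of each row and the entries of each column form an orthonormal basis of $\mathbb C^n$. Two QLS $\Psi=(\psi_{ij})$ and $\Phi=(\phi_{ij})$ of order $n$ are orthogonal if $\{\psi_{ij}\otimes\phi_{ij}: 1\le i,j\le n\}$ is an orthonormal basis of $\mathbb C^n\otimes\mathbb C^n$. Fix the standard orthonormal basis $\ket{1},\dots,\ket{n}$ of $\mathbb C^n$. Two pairs of orthogonal QLS of order $n$ are isotopic if one can be obtained from the other by a sequence of the operations: (i) multiplying individual entries by phase factors; (ii) permuting the rows, and permuting the columns, simultaneously in both squares; (iii) for each square separately, applying one unitary transformation of $\mathbb C^n$ to all entries of that square. A pair is classical if it is isotopic to a pair all of whose entries lie in $\{\ket{1},\dots,\ket{n}\}$. *)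

From HB Require Import structures.
From mathcomp Require Import all_boot all_order all_algebra.
From mathcomp Require Import fingroup perm complex mxtens.
From mathcomp Require Import reals.
From Stdlib Require Import Relations.

Set Implicit Arguments.
Unset Strict Implicit.
Unset Printing Implicit Defensive.

Import Order.TTheory GRing.Theory Num.Theory.
Local Open Scope ring_scope.

Section QLS.
Variable R : rcfType.
Local Notation C := R[i].

Definition adj {m n : nat} (A : 'M[C]_(m, n)) : 'M[C]_(n, m) :=
  (map_mx Num.conj A)^T.

(* standard Hermitian inner product <u, v> = u^* v (conjugate-linear in u) *)
Definition hdot {n : nat} (u v : 'cV[C]_n) : C := (adj u *m v) 0 0.

Definition orthonormal {I : finType} {n : nat} (f : I -> 'cV[C]_n) : Prop :=
  forall i j, hdot (f i) (f j) = (i == j)%:R.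

Definition spans {I : finType} {n : nat} (f : I -> 'cV[C]_n) : Prop :=
  forall v : 'cV[C]_n, exists c : I -> C, v = \sum_i c i *: f i.

Definition is_onb {I : finType} {n : nat} (f : I -> 'cV[C]_n) : Prop :=
  orthonormal f /\ spans f.

Definition square (n : nat) := 'I_n -> 'I_n -> 'cV[C]_n.

Definition is_QLS {n : nat} (Psi : square n) : Prop :=
  (forall i, is_onb (fun j => Psi i j)) /\ (forall j, is_onb (fun i => Psi i j)).

(* orthogonality of two QLS: the psi_ij (x) phi_ij form an ONB of C^n (x) C^n,
   with C^n (x) C^n = C^(n*n) via the Kronecker product *)
Definition orthogonal_QLS {n : nat} (Psi Phi : square n) : Prop :=
  is_onb (fun ij : ('I_n * 'I_n)%type => Psi ij.1 ij.2 *t Phi ij.1 ij.2).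

Definition unitary {n : nat} (U : 'M[C]_n) : Prop := U *m adj U = 1%:M.

Inductive isotopy_step {n : nat} : (square n * square n)%type -> (square n * square n)%type -> Prop :=
  | iso_phase (P Q : square n) (a b : 'I_n -> 'I_n -> C) :
      (forall i j, `|a i j| = 1) -> (forall i j, `|b i j| = 1) ->
      isotopy_step (P, Q) (fun i j => a i j *: P i j, fun i j => b i j *: Q i j)
  | iso_perm (P Q : square n) (s t : 'S_n) :
      isotopy_step (P, Q) (fun i j => P (s i) (t j), fun i j => Q (s i) (t j))
  | iso_unitary (P Q : square n) (U V : 'M[C]_n) :
      unitary U -> unitary V ->
      isotopy_step (P, Q) (fun i j => U *m P i j, fun i j => V *m Q i j).

Definition isotopic {n : nat} (PQ PQ' : (square n * square n)%type) : Prop :=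
  clos_refl_trans _ isotopy_step PQ PQ'.

Definition ket {n : nat} (k : 'I_n) : 'cV[C]_n := delta_mx k 0.

Definition classical_pair {n : nat} (Psi Phi : square n) : Prop :=
  exists Psi' Phi' : square n,
    isotopic (Psi, Phi) (Psi', Phi') /\
    (forall i j, exists k, Psi' i j = ket k) /\
    (forall i j, exists k, Phi' i j = ket k).

End QLS.

From Pilot Require Import Defs.
From HB Require Import structures.
From mathcomp Require Import all_boot all_order all_algebra.
From mathcomp Require Import complex mxtens reals.
From Stdlib Require Import Relations.
Import Defs.

Set Implicit Arguments.
Unset Strict Implicit.
Unset Printing Implicit Defensive.

Import Order.TTheory GRing.Theory Num.Theory.
Local Open Scope ring_scope.

(* After the first row of each square is rotated to the standard basis, the
   vectors psi_ij and phi_ij (i <> 0) must have disjoint supports, both avoiding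
   the coordinate j.  If some psi_ij had two coordinates in its support, phi_ij
   would be a multiple of the remaining basis vector |l>, and orthogonality in
   column j would then force psi_dj to be a multiple of |l> for both rows d
   other than 0 and i; but those two vectors are orthogonal.  Hence every entry
   is a phase times a basis vector, and so is every entry of the second square
   by symmetry. *)

Lemma exists_notin (T : finType) (s : seq T) : (size s < #|T|)%N -> exists x, x \notin s.
Proof.
move=> lt_s_T; apply/existsP; rewrite -negb_forall.
apply: contraL lt_s_T => /forallP in_s; rewrite -leqNgt.
by apply: leq_trans (card_size s); apply/subset_leq_card/subsetP => x _; apply: in_s.
Qed.

Lemma mem_uniq_card (T : finType) (s : seq T) (x : T) :
  uniq s -> size s = #|T| -> x \in s.
Proof.
move=> Us size_s; have [|_ ->] := uniq_min_size Us (fun y _ => mem_enum T y).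
  by rewrite size_s cardE.
by rewrite mem_enum.
Qed.

Section Hermitian.
Variable R : rcfType.
Local Notation C := R[i].

Lemma hdotE n (u v : 'cV[C]_n) : hdot u v = \sum_k (u k 0)^* * v k 0.
Proof. by rewrite /hdot /adj mxE; apply: eq_bigr => k _; rewrite !mxE. Qed.

Lemma adjM m n p (A : 'M[C]_(m, n)) (B : 'M[C]_(n, p)) : adj (A *m B) = adj B *m adj A.
Proof. by rewrite /adj map_mxM trmx_mul. Qed.

Lemma hdot_tens m n (a c : 'cV[C]_m) (b d : 'cV[C]_n) :
  hdot (a *t b) (c *t d) = hdot a c * hdot b d.
Proof.
rewrite /hdot /adj.
have -> : (map_mx Num.conj (a *t b))^T = (map_mx Num.conj a)^T *t (map_mx Num.conj b)^T.
  by apply/matrixP => i j; rewrite !mxE rmorphM.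
rewrite (tensmx_mul (map_mx Num.conj a)^T (map_mx Num.conj b)^T c d) mxE.
by rewrite !(ord1 (_ : 'I_1)).
Qed.

Lemma hdot_unitary n (U : 'M[C]_n) (u v : 'cV[C]_n) :
  unitary U -> hdot (U *m u) (U *m v) = hdot u v.
Proof. by move=> uU; rewrite /hdot adjM -mulmxA (mulmxA (adj U)) (mulmx1C uU) mul1mx. Qed.

Lemma orthonormal_tens_unitary (I : finType) m n (f : I -> 'cV[C]_m) (g : I -> 'cV[C]_n)
    (U : 'M[C]_m) (V : 'M[C]_n) :
  unitary U -> unitary V -> orthonormal (fun x => f x *t g x) ->
  orthonormal (fun x => (U *m f x) *t (V *m g x)).
Proof. by move=> uU uV fg x y; rewrite hdot_tens !hdot_unitary // -hdot_tens. Qed.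

Lemma orthonormal_tensC (I : finType) m n (f : I -> 'cV[C]_m) (g : I -> 'cV[C]_n) :
  orthonormal (fun x => f x *t g x) -> orthonormal (fun x => g x *t f x).
Proof. by move=> fg x y; rewrite hdot_tens mulrC -hdot_tens. Qed.

Lemma hdot_ket n (k : 'I_n) (v : 'cV[C]_n) : hdot (ket R k) v = v k 0.
Proof.
rewrite hdotE (bigD1 k) //= !mxE eqxx conjC1 mul1r big1 ?addr0 // => t tk.
by rewrite !mxE (negPf tk) conjC0 mul0r.
Qed.

Lemma unit_nz_coord n (u : 'cV[C]_n) : hdot u u = 1 -> exists k, u k 0 != 0.
Proof.
move=> u1; have [k uk | u0] := pickP (fun k => u k 0 != 0); first by exists k.
move: u1; rewrite hdotE big1 => [/eqP|k _]; first by rewrite eq_sym oner_eq0.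
by move/negbFE/eqP: (u0 k) ->; rewrite mulr0.
Qed.

Lemma hdot_single n (u v : 'cV[C]_n) (a : 'I_n) :
  (forall t, t != a -> (u t 0)^* * v t 0 = 0) -> hdot u v = (u a 0)^* * v a 0.
Proof. by move=> uv; rewrite hdotE (bigD1 a) //= big1 ?addr0. Qed.

Lemma orth_single n (u v : 'cV[C]_n) (a : 'I_n) :
  hdot u v = 0 -> (forall t, t != a -> (u t 0)^* * v t 0 = 0) -> u a 0 != 0 -> v a 0 = 0.
Proof.
move=> uv0 uv ua; move/eqP: uv0; rewrite (hdot_single uv) mulf_eq0 conjC_eq0.
by rewrite (negPf ua) => /eqP.
Qed.

Definition vanishes_off n (u : 'cV[C]_n) (k : 'I_n) := forall t, t != k -> u t 0 = 0.

Lemma vanishes_off_conjl n (u : 'cV[C]_n) (a : 'I_n) :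
  vanishes_off u a -> forall (v : 'cV[C]_n) t, t != a -> (u t 0)^* * v t 0 = 0.
Proof. by move=> ua v t /ua ->; rewrite conjC0 mul0r. Qed.

Lemma unit_vanishes_off_ket n (u : 'cV[C]_n) (m : 'I_n) :
  hdot u u = 1 -> vanishes_off u m -> `|(u m 0)^*| = 1 /\ (u m 0)^* *: u = ket R m.
Proof.
move=> u1 um; have unorm : (u m 0)^* * u m 0 = 1.
  by rewrite -(hdot_single (vanishes_off_conjl um u)).
split; first by apply/eqP; rewrite -sqrp_eq1 // normCK conjCK unorm.
apply/matrixP => r c; rewrite (ord1 c) !mxE eqxx andbT.
have [->|rm] := eqVneq r m; first by rewrite unorm.
by rewrite (um r rm) mulr0.
Qed.

Lemma unit_vanishes_off_nz n (u : 'cV[C]_n) (m : 'I_n) :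
  hdot u u = 1 -> vanishes_off u m -> u m 0 != 0.
Proof.
move=> u1 um; have [/eqP + _] := unit_vanishes_off_ket u1 um.
by apply: contraTneq => ->; rewrite conjC0 normr0 eq_sym oner_eq0.
Qed.

Definition adj_frame_mx n (f : 'I_n -> 'cV[C]_n) : 'M[C]_n := \matrix_(k, m) (f k m 0)^*.

Lemma adj_frame_mxE n (f : 'I_n -> 'cV[C]_n) (v : 'cV[C]_n) k :
  (adj_frame_mx f *m v) k 0 = hdot (f k) v.
Proof. by rewrite mxE hdotE; apply: eq_bigr => m _; rewrite mxE. Qed.

Lemma adj_frame_mx_unitary n (f : 'I_n -> 'cV[C]_n) :
  orthonormal f -> unitary (adj_frame_mx f).
Proof.
move=> onf; apply/matrixP => k k'; rewrite !mxE -onf hdotE.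
by apply: eq_bigr => m _; rewrite !mxE conjCK.
Qed.

Lemma adj_frame_mx_frame n (f : 'I_n -> 'cV[C]_n) k :
  orthonormal f -> adj_frame_mx f *m f k = ket R k.
Proof.
by move=> onf; apply/matrixP => r c; rewrite (ord1 c) adj_frame_mxE onf !mxE andbT eq_sym.
Qed.

Lemma classical_pair_of_vanishes_off n (Psi Phi : square R n) (U V : 'M[C]_n) :
  unitary U -> unitary V ->
  (forall i j, hdot (U *m Psi i j) (U *m Psi i j) = 1) ->
  (forall i j, hdot (V *m Phi i j) (V *m Phi i j) = 1) ->
  (forall i j, exists m, vanishes_off (U *m Psi i j) m) ->
  (forall i j, exists m, vanishes_off (V *m Phi i j) m) ->
  classical_pair Psi Phi.
Proof.
move=> uU uV Psi1 Phi1 PsiS PhiS.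
have /fin_all_exists [mP mPE] : forall ij : 'I_n * 'I_n,
  exists m, vanishes_off (U *m Psi ij.1 ij.2) m by case=> i j; apply: PsiS.
have /fin_all_exists [mQ mQE] : forall ij : 'I_n * 'I_n,
  exists m, vanishes_off (V *m Phi ij.1 ij.2) m by case=> i j; apply: PhiS.
pose a i j := ((U *m Psi i j) (mP (i, j)) 0)^*.
pose b i j := ((V *m Phi i j) (mQ (i, j)) 0)^*.
have ketP i j := unit_vanishes_off_ket (Psi1 i j) (mPE (i, j)).
have ketQ i j := unit_vanishes_off_ket (Phi1 i j) (mQE (i, j)).
exists (fun i j => a i j *: (U *m Psi i j)), (fun i j => b i j *: (V *m Phi i j)).
split; [|split].
- apply: rt_trans (rt_step _ _ _ _ (iso_unitary Psi Phi uU uV)) _.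
  by apply/rt_step/iso_phase => i j; [exact: (ketP i j).1 | exact: (ketQ i j).1].
- by move=> i j; exists (mP (i, j)); exact: (ketP i j).2.
- by move=> i j; exists (mQ (i, j)); exact: (ketQ i j).2.
Qed.

End Hermitian.

Section OrderFour.
Variable R : rcfType.
Local Notation C := R[i].
Variables X Y : 'I_4 -> 'I_4 -> 'cV[C]_4.
Hypothesis colX : forall j, orthonormal (X^~ j).
Hypothesis colY : forall j, orthonormal (Y^~ j).
Hypothesis X0 : forall k, X 0 k = ket R k.
Hypothesis Y0 : forall k, Y 0 k = ket R k.
Hypothesis orthXY : orthonormal (fun ij : 'I_4 * 'I_4 => X ij.1 ij.2 *t Y ij.1 ij.2).

Let X_unit i j : hdot (X i j) (X i j) = 1. Proof. by rewrite colX eqxx. Qed.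
Let Y_unit i j : hdot (Y i j) (Y i j) = 1. Proof. by rewrite colY eqxx. Qed.

Let X_orth j i d : d != i -> hdot (X i j) (X d j) = 0.
Proof. by move=> di; rewrite colX eq_sym (negPf di). Qed.
Let Y_orth j i d : d != i -> hdot (Y i j) (Y d j) = 0.
Proof. by move=> di; rewrite colY eq_sym (negPf di). Qed.

Let X_diag i j : i != 0 -> X i j j 0 = 0.
Proof. by move=> i0; rewrite -(X_orth j i0) X0 hdot_ket. Qed.
Let Y_diag i j : i != 0 -> Y i j j 0 = 0.
Proof. by move=> i0; rewrite -(Y_orth j i0) Y0 hdot_ket. Qed.

Let XY_disjoint i j t : i != 0 -> X i j t 0 * Y i j t 0 = 0.
Proof.
move=> i0; have := orthXY (0, t) (i, j).
by rewrite hdot_tens X0 Y0 !hdot_ket xpair_eqE eq_sym (negPf i0).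
Qed.

Let X_eq0 i j t : i != 0 -> Y i j t 0 != 0 -> X i j t 0 = 0.
Proof.
by move=> i0 Yt; move/eqP: (XY_disjoint j t i0); rewrite mulf_eq0 (negPf Yt) orbF => /eqP.
Qed.
Let Y_eq0 i j t : i != 0 -> X i j t 0 != 0 -> Y i j t 0 = 0.
Proof.
by move=> i0 Xt; move/eqP: (XY_disjoint j t i0); rewrite mulf_eq0 (negPf Xt) => /eqP.
Qed.

Lemma other_rows_vanish_off i d j l m k :
    i != 0 -> d != 0 -> d != i -> (forall t, t \in [:: l; j; m; k]) ->
    X i j m 0 != 0 -> X i j k 0 != 0 -> vanishes_off (Y i j) l ->
  vanishes_off (X d j) l.
Proof.
move=> i0 d0 di cover Xm Xk Yl.
have Yil := unit_vanishes_off_nz (Y_unit i j) Yl.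
have Xil : X i j l 0 = 0 := X_eq0 i0 Yil.
have Ydl : Y d j l 0 = 0 := orth_single (Y_orth j di) (vanishes_off_conjl Yl _) Yil.
have [t0 Ydt0] := unit_nz_coord (Y_unit d j).
have Xdt0 := X_eq0 d0 Ydt0.
wlog t0m : m k Xm Xk cover / t0 = m.
  move=> sym; have := cover t0; rewrite !inE => /or4P[] /eqP t0E.
  - by rewrite t0E Ydl eqxx in Ydt0.
  - by rewrite t0E Y_diag ?eqxx in Ydt0.
  - exact: (sym m k).
  apply: (sym k m) => // t; have := cover t; rewrite !inE.
  by case/or4P => ->; rewrite ?orbT.
subst t0; have Xdk : X d j k 0 = 0.
  apply: orth_single (X_orth j di) _ Xk => t; have := cover t; rewrite !inE.
  case/or4P => /eqP -> tk; rewrite ?Xil ?X_diag ?Xdt0 ?conjC0 ?mul0r ?mulr0 //.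
  by rewrite eqxx in tk.
move=> t; have := cover t; rewrite !inE.
case/or4P => /eqP -> tl; rewrite ?X_diag ?Xdt0 ?Xdk //.
by rewrite eqxx in tl.
Qed.

Lemma X_vanishes_off i j : exists m, vanishes_off (X i j) m.
Proof.
have [->|i0] := eqVneq i 0; first by exists j => t tj; rewrite X0 !mxE (negPf tj).
have [m Xm] := unit_nz_coord (X_unit i j).
have [k /andP[km Xk] | Xoff] := pickP (fun k => (k != m) && (X i j k 0 != 0)); last first.
  by exists m => t tm; move: (Xoff t); rewrite tm /= => /negbFE/eqP.
exfalso.
have jm : j != m by apply: contraNneq Xm => <-; rewrite X_diag.
have jk : j != k by apply: contraNneq Xk => <-; rewrite X_diag.
have [l l_new] : exists l, l \notin [:: j; m; k] by apply: exists_notin; rewrite card_ord.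
have cover t : t \in [:: l; j; m; k].
  by apply: mem_uniq_card; rewrite ?card_ord //= l_new !inE negb_or jm jk eq_sym km.
have Yl : vanishes_off (Y i j) l.
  move=> t; have := cover t; rewrite !inE.
  case/or4P => /eqP -> tl; rewrite ?Y_diag ?Y_eq0 //.
  by rewrite eqxx in tl.
have [d1 d1_new] : exists d, d \notin [:: 0; i] by apply: exists_notin; rewrite card_ord.
have [d2 d2_new] : exists d, d \notin [:: 0; i; d1].
  by apply: exists_notin; rewrite card_ord.
move: d1_new d2_new; rewrite !inE !negb_or => /andP[d10 d1i] /and3P[d20 d2i d21].
have Xd1 := other_rows_vanish_off i0 d10 d1i cover Xm Xk Yl.
have Xd2 := other_rows_vanish_off i0 d20 d2i cover Xm Xk Yl.
have /eqP := orth_single (X_orth j d21) (vanishes_off_conjl Xd1 _)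
  (unit_vanishes_off_nz (X_unit d1 j) Xd1).
by rewrite (negPf (unit_vanishes_off_nz (X_unit d2 j) Xd2)).
Qed.

End OrderFour.

Theorem mainTheorem3 (R : realType) (Psi Phi : square R 4) :
  is_QLS Psi -> is_QLS Phi -> orthogonal_QLS Psi Phi -> classical_pair Psi Phi.
Proof.
move=> [rowP colP] [rowQ colQ] orthPQ.
pose U := adj_frame_mx (Psi 0); pose V := adj_frame_mx (Phi 0).
have uU : unitary U := adj_frame_mx_unitary (rowP 0).1.
have uV : unitary V := adj_frame_mx_unitary (rowQ 0).1.
pose X i j := U *m Psi i j; pose Y i j := V *m Phi i j.
have colX j : orthonormal (X^~ j).
  by move=> i i'; rewrite hdot_unitary // (colP j).1.
have colY j : orthonormal (Y^~ j).
  by move=> i i'; rewrite hdot_unitary // (colQ j).1.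
have X0 k : X 0 k = ket R k := adj_frame_mx_frame k (rowP 0).1.
have Y0 k : Y 0 k = ket R k := adj_frame_mx_frame k (rowQ 0).1.
have orthXY := orthonormal_tens_unitary uU uV orthPQ.1.
apply: (classical_pair_of_vanishes_off uU uV).
- by move=> i j; have := colX j i i; rewrite eqxx.
- by move=> i j; have := colY j i i; rewrite eqxx.
- exact: (X_vanishes_off colX colY X0 Y0 orthXY).
- exact: (X_vanishes_off colY colX Y0 X0 (orthonormal_tensC orthXY)).
Qed.
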